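(* Let $(W,\unlhd,\prec)$ be an intuitionistic modal Kripke frame, and let $\lhd$ denote the strict part of $\unlhd$ (i.e. $\unlhd$ minus the identity). The following are equivalent: (i) $\prec\,=\,\lhd$ and the Alexandroff topology on $W$ whose open sets are the $\unlhd$-upward closed sets is scattered; (ii) $(W,\unlhd,\prec)$ is a frame for $\mathsf{KM}$ (every theorem of $\mathsf{KM}$ is valid in it); (iii) $\prec\,=\,\lhd$ and there is no infinite strictly ascending $\lhd$-chain $w_0\lhd w_1\lhd w_2\lhd\cdots$ in $W$.
   Context: An intuitionistic modal Kripke frame is a triple $(W,\unlhd,\prec)$ with $\unlhd$ a partial order on $W$ and $\prec$ a binary relation such that $w\unlhd v$ and $v\prec x$ imply $w\prec x$. Formulas are built from propositional variables, $\bot,\to,\wedge,\vee,\Box$. A valuation assigns to each variable a $\unlhd$-upward closed subset of $W$; connectives are interpreted as in the Heyting algebra of upsets, and $\Box A$ denotes $\{w\mid \forall x(w\prec x\Rightarrow x\in A)\}$. A formula is valid in the frame if it denotes $W$ under every valuation. $\mathsf{KM}$ is the smallest set of formulas containing all axioms of intuitionistic propositional logic, $\Box(A\to B)\to(\Box A\to\Box B)$, $(\Box A\to A)\to A$ and $\Box A\to((B\to A)\vee B)$, and closed under modus ponens, necessitation ($A/\Box A$) and substitution. A topological space is scattered if every nonempty subset has an isolated point. *)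

Definition im_frame (W : Type) (le prec : W -> W -> Prop) : Prop :=
  (forall w, le w w) /\
  (forall w v u, le w v -> le v u -> le w u) /\
  (forall w v, le w v -> le v w -> w = v) /\
  (forall w v x, le w v -> prec v x -> prec w x).

Definition strict_part {W : Type} (le : W -> W -> Prop) (w v : W) : Prop :=
  le w v /\ w <> v.

Definition upset {W : Type} (le : W -> W -> Prop) (U : W -> Prop) : Prop :=
  forall w v, le w v -> U w -> U v.

Inductive form : Type :=
| Var : nat -> form
| Bot : form
| Imp : form -> form -> form
| And : form -> form -> form
| Or  : form -> form -> form
| Box : form -> form.

Fixpoint subst (s : nat -> form) (A : form) : form :=
  match A with
  | Var p => s p
  | Bot => Bot
  | Imp A B => Imp (subst s A) (subst s B)
  | And A B => And (subst s A) (subst s B)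
  | Or A B => Or (subst s A) (subst s B)
  | Box A => Box (subst s A)
  end.

Fixpoint denote {W : Type} (le prec : W -> W -> Prop) (V : nat -> W -> Prop)
  (A : form) : W -> Prop :=
  match A with
  | Var p => V p
  | Bot => fun _ => False
  | Imp A B => fun w => forall v, le w v ->
                 denote le prec V A v -> denote le prec V B v
  | And A B => fun w => denote le prec V A w /\ denote le prec V B w
  | Or A B => fun w => denote le prec V A w \/ denote le prec V B w
  | Box A => fun w => forall x, prec w x -> denote le prec V A x
  end.

Definition valid_in {W : Type} (le prec : W -> W -> Prop) (A : form) : Prop :=
  forall V : nat -> W -> Prop, (forall p, upset le (V p)) ->
    forall w, denote le prec V A w.

Inductive ipc_axiom : form -> Prop :=
| ax_K  A B   : ipc_axiom (Imp A (Imp B A))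
| ax_S  A B C : ipc_axiom (Imp (Imp A (Imp B C)) (Imp (Imp A B) (Imp A C)))
| ax_A1 A B   : ipc_axiom (Imp (And A B) A)
| ax_A2 A B   : ipc_axiom (Imp (And A B) B)
| ax_AI A B   : ipc_axiom (Imp A (Imp B (And A B)))
| ax_O1 A B   : ipc_axiom (Imp A (Or A B))
| ax_O2 A B   : ipc_axiom (Imp B (Or A B))
| ax_OE A B C : ipc_axiom (Imp (Imp A C) (Imp (Imp B C) (Imp (Or A B) C)))
| ax_EFQ A    : ipc_axiom (Imp Bot A).

Inductive KM : form -> Prop :=
| KM_ipc A : ipc_axiom A -> KM A
| KM_k A B : KM (Imp (Box (Imp A B)) (Imp (Box A) (Box B)))
| KM_lob A : KM (Imp (Imp (Box A) A) A)
| KM_km A B : KM (Imp (Box A) (Or (Imp B A) B))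
| KM_mp A B : KM (Imp A B) -> KM A -> KM B
| KM_nec A : KM A -> KM (Box A)
| KM_subst (s : nat -> form) A : KM A -> KM (subst s A).

Definition KM_frame {W : Type} (le prec : W -> W -> Prop) : Prop :=
  forall A, KM A -> valid_in le prec A.

Definition alexandroff_open {W : Type} (le : W -> W -> Prop) (U : W -> Prop) : Prop :=
  upset le U.

Definition isolated_point {W : Type} (is_open : (W -> Prop) -> Prop)
  (S : W -> Prop) (x : W) : Prop :=
  S x /\ exists U, is_open U /\ U x /\ (forall y, U y -> S y -> y = x).

Definition scattered {W : Type} (is_open : (W -> Prop) -> Prop) : Prop :=
  forall S : W -> Prop, (exists x, S x) -> exists x, isolated_point is_open S x.

Definition same_rel {W : Type} (R1 R2 : W -> W -> Prop) : Prop :=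
  forall w v, R1 w v <-> R2 w v.

From Stdlib Require Import Classical ClassicalEpsilon.
From Stdlib Require Import Relations.Relation_Operators Wellfounded.Inclusion.

(* In the Alexandroff topology a point of S is isolated in S exactly when no
   strict ⊴-successor of it lies in S; so scatteredness, like the absence of
   infinite ascending ◁-chains, says that the converse of ◁ is well-founded.
   When ≺ = ◁, this well-foundedness is what validates Löb's axiom
   (□A → A) → A, and □A → ((B → A) ∨ B) holds because a point outside B sees
   every point of B above it through ≺.  Conversely, Löb's axiom applied to the
   upset of points accessible for the converse of ≺ makes that converse
   well-founded, and well-chosen instances of the two axioms force ≺ ⊆ ◁ and
   ◁ ⊆ ≺. *)

Section WellFounded.
Variables (A : Type) (R : A -> A -> Prop).

Lemma wf_iff_ex_minimal :
  well_founded R <->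
  forall S : A -> Prop, (exists x, S x) ->
    exists x, S x /\ forall y, R y x -> ~ S y.
Proof.
  split.
  - intros wfR S [x Sx]. apply NNPP; intros no_min. revert Sx.
    induction x as [x IH] using (well_founded_ind wfR). intros Sx.
    apply no_min. exists x. split; [exact Sx|]. exact IH.
  - intros ex_min x. apply NNPP; intros nAx.
    destruct (ex_min (fun x => ~ Acc R x) (ex_intro _ x nAx)) as [m [nAm m_min]].
    apply nAm. constructor. intros y Rym. apply NNPP. exact (m_min y Rym).
Qed.

Lemma wf_iff_no_descending_chain :
  well_founded R <-> ~ exists f : nat -> A, forall n, R (f (S n)) (f n).
Proof.
  split.
  - intros wfR [f desc].
    assert (no_chain_from : forall x n, f n = x -> False).
    { intros x. induction x as [x IH] using (well_founded_ind wfR). intros n fn.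
      subst x. exact (IH (f (S n)) (desc n) (S n) eq_refl). }
    exact (no_chain_from (f 0) 0 eq_refl).
  - intros no_chain. apply NNPP; intros not_wf. apply no_chain.
    destruct (not_all_ex_not _ _ not_wf) as [x0 nAx0].
    assert (step : forall x : {x | ~ Acc R x},
               {y : {y | ~ Acc R y} | R (proj1_sig y) (proj1_sig x)}).
    { intros [x nAx]. apply constructive_indefinite_description.
      apply NNPP; intros no_pred. apply nAx. constructor. intros y Ryx.
      apply NNPP; intros nAy. apply no_pred. exists (exist _ y nAy). exact Ryx. }
    pose (chain := nat_rect (fun _ => {x | ~ Acc R x}) (exist _ x0 nAx0)
                            (fun _ x => proj1_sig (step x))).
    exists (fun n => proj1_sig (chain n)). intros n. exact (proj2_sig (step (chain n))).
Qed.

End WellFounded.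

Section Alexandroff.
Variables (W : Type) (le : W -> W -> Prop).
Hypothesis le_refl : forall w, le w w.
Hypothesis le_trans : forall w v u, le w v -> le v u -> le w u.

Lemma alexandroff_isolated_point_iff (S : W -> Prop) (x : W) :
  isolated_point (alexandroff_open le) S x <->
  S x /\ forall y, strict_part le x y -> ~ S y.
Proof.
  split.
  - intros [Sx [U [openU [Ux U_S]]]]. split; [exact Sx|].
    intros y [xy neq] Sy. apply neq. symmetry. exact (U_S y (openU x y xy Ux) Sy).
  - intros [Sx x_max]. split; [exact Sx|]. exists (le x). split; [|split].
    + intros u v uv xu. exact (le_trans x u v xu uv).
    + apply le_refl.
    + intros y xy Sy. apply NNPP; intros neq.
      exact (x_max y (conj xy (fun e => neq (eq_sym e))) Sy).
Qed.

Lemma scattered_alexandroff_iff_wf :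
  scattered (alexandroff_open le) <-> well_founded (transp W (strict_part le)).
Proof.
  rewrite wf_iff_ex_minimal. unfold scattered.
  split; intros isolated S neS; destruct (isolated S neS) as [x Hx]; exists x.
  - exact (proj1 (alexandroff_isolated_point_iff S x) Hx).
  - exact (proj2 (alexandroff_isolated_point_iff S x) Hx).
Qed.

End Alexandroff.

Section Frame.
Variables (W : Type) (le prec : W -> W -> Prop).

Lemma denote_subst (V : nat -> W -> Prop) (s : nat -> form) (A : form) (w : W) :
  denote le prec V (subst s A) w <->
  denote le prec (fun p => denote le prec V (s p)) A w.
Proof.
  revert w. induction A; simpl; intros w.
  - tauto.
  - tauto.
  - split; intros H v wv HA; apply IHA2; apply H; auto; apply IHA1; auto.
  - rewrite IHA1, IHA2. tauto.
  - rewrite IHA1, IHA2. tauto.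
  - split; intros H x wx; apply IHA; auto.
Qed.

Hypothesis frame : im_frame W le prec.
Let le_refl : forall w, le w w := proj1 frame.
Let le_trans : forall w v u, le w v -> le v u -> le w u := proj1 (proj2 frame).
Let le_antisym : forall w v, le w v -> le v w -> w = v := proj1 (proj2 (proj2 frame)).
Let le_prec : forall w v x, le w v -> prec v x -> prec w x := proj2 (proj2 (proj2 frame)).

Lemma denote_upset (V : nat -> W -> Prop) :
  (forall p, upset le (V p)) -> forall A, upset le (denote le prec V A).
Proof.
  intros HV A. induction A; simpl; intros w v wv Hw.
  - exact (HV n w v wv Hw).
  - exact Hw.
  - intros u vu HA. exact (Hw u (le_trans w v u wv vu) HA).
  - destruct Hw as [H1 H2]. split; eauto.
  - destruct Hw as [H1|H2]; [left|right]; eauto.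
  - intros x vx. exact (Hw x (le_prec w v x wv vx)).
Qed.

Lemma valid_in_mp (A B : form) :
  valid_in le prec (Imp A B) -> valid_in le prec A -> valid_in le prec B.
Proof. intros HAB HA V HV w. exact (HAB V HV w w (le_refl w) (HA V HV w)). Qed.

Lemma valid_in_nec (A : form) : valid_in le prec A -> valid_in le prec (Box A).
Proof. intros HA V HV w x _. exact (HA V HV x). Qed.

Lemma valid_in_subst (s : nat -> form) (A : form) :
  valid_in le prec A -> valid_in le prec (subst s A).
Proof.
  intros HA V HV w. apply denote_subst. apply HA.
  intros p. exact (denote_upset V HV (s p)).
Qed.

Lemma ipc_axiom_valid (A : form) : ipc_axiom A -> valid_in le prec A.
Proof.
  intros ax V HV w. pose proof (denote_upset V HV) as up.
  destruct ax; simpl.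
  - intros v _ HA u vu _. exact (up _ v u vu HA).
  - intros v _ HABC u vu HAB t ut HA.
    assert (vt : le v t) by eauto.
    exact (HABC t vt HA t (le_refl t) (HAB t ut HA)).
  - intros v _ [HA _]. exact HA.
  - intros v _ [_ HB]. exact HB.
  - intros v _ HA u vu HB. split; [exact (up _ v u vu HA) | exact HB].
  - intros v _ HA. left. exact HA.
  - intros v _ HB. right. exact HB.
  - intros v _ HAC u vu HBC t ut [HA|HB].
    + exact (HAC t (le_trans v u t vu ut) HA).
    + exact (HBC t ut HB).
  - intros v _ [].
Qed.

Lemma K_valid (A B : form) :
  valid_in le prec (Imp (Box (Imp A B)) (Imp (Box A) (Box B))).
Proof.
  intros V HV w. simpl. intros v _ boxAB u vu boxA x ux.
  exact (boxAB x (le_prec v u x vu ux) x (le_refl x) (boxA x ux)).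
Qed.

Section Soundness.
Hypothesis prec_strict : same_rel prec (strict_part le).
Hypothesis strict_wf : well_founded (transp W (strict_part le)).

Lemma lob_valid (A : form) : valid_in le prec (Imp (Imp (Box A) A) A).
Proof.
  intros V HV w. simpl. intros v _.
  induction v as [v IH] using (well_founded_ind strict_wf). intros lob.
  apply lob; [apply le_refl|]. intros x vx.
  pose proof (proj1 (prec_strict v x) vx) as [le_vx neq].
  apply IH; [split; assumption|].
  intros u xu boxA. exact (lob u (le_trans v x u le_vx xu) boxA).
Qed.

Lemma km_axiom_valid (A B : form) : valid_in le prec (Imp (Box A) (Or (Imp B A) B)).
Proof.
  intros V HV w. simpl. intros v _ boxA.
  destruct (classic (denote le prec V B v)) as [Bv|nBv]; [right; exact Bv|left].
  intros u vu Bu. apply boxA, prec_strict. split; [exact vu|].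
  intros <-. exact (nBv Bu).
Qed.

Theorem KM_sound : KM_frame le prec.
Proof.
  intros A KMA. induction KMA.
  - apply ipc_axiom_valid. assumption.
  - apply K_valid.
  - apply lob_valid.
  - apply km_axiom_valid.
  - eapply valid_in_mp; eassumption.
  - apply valid_in_nec. assumption.
  - apply valid_in_subst. assumption.
Qed.

End Soundness.

Section Completeness.
Hypothesis KM_valid : KM_frame le prec.

Lemma lob_induction (P : W -> Prop) (w : W) : upset le P ->
  (forall v, le w v -> (forall x, prec v x -> P x) -> P v) -> P w.
Proof.
  intros up step.
  exact (KM_valid _ (KM_lob (Var 0)) (fun _ => P) (fun _ => up) w w (le_refl w) step).
Qed.

Lemma KM_frame_wf_prec : well_founded (transp W prec).
Proof.
  intros w. apply lob_induction.
  - intros u v uv Au. constructor. intros y vy.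
    exact (Acc_inv Au (le_prec u v y uv vy)).
  - intros v _ IH. constructor. exact IH.
Qed.

Lemma KM_frame_prec_irrefl (w : W) : ~ prec w w.
Proof.
  intros ww. apply (proj1 (wf_iff_no_descending_chain _ _) KM_frame_wf_prec).
  exists (fun _ => w). intros _. exact ww.
Qed.

(* Löb's axiom for the upset complementary to ↓w ∪ ↓x. *)
Lemma KM_frame_prec_le (w x : W) : prec w x -> le w x.
Proof.
  intros wx. apply NNPP; intros nwx.
  apply (lob_induction (fun u => ~ (le u w \/ le u x)) w).
  - intros a b ab na [bw|bx]; apply na; [left|right]; eauto.
  - intros v wv boxP [vw|vx].
    + exact (boxP x (le_prec v w x vw wx) (or_intror (le_refl x))).
    + exact (nwx (le_trans w v x wv vx)).
  - left. apply le_refl.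
Qed.

Lemma KM_frame_prec_strict (w x : W) : prec w x -> strict_part le w x.
Proof.
  intros wx. split; [exact (KM_frame_prec_le w x wx)|].
  intros <-. exact (KM_frame_prec_irrefl w wx).
Qed.

(* The axiom □A → ((B → A) ∨ B) with A := complement of ↓x and B := ↑x. *)
Lemma KM_frame_strict_prec (v x : W) : strict_part le v x -> prec v x.
Proof.
  induction v as [v IH] using (well_founded_ind KM_frame_wf_prec).
  intros [vx neq]. apply NNPP; intros nvx.
  assert (boxA : forall y, prec v y -> ~ le y x).
  { intros y vy yx. apply nvx. destruct (classic (y = x)) as [<-|yx_neq]; [exact vy|].
    exact (le_prec v y x (KM_frame_prec_le v y vy) (IH y vy (conj yx yx_neq))). }
  pose (V := fun p => match p with 0 => fun u => ~ le u x | _ => le x end).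
  assert (HV : forall p, upset le (V p)).
  { intros [|p] a b ab; simpl.
    - intros na bx. exact (na (le_trans a b x ab bx)).
    - intros xa. exact (le_trans x a b xa ab). }
  destruct (KM_valid _ (KM_km (Var 0) (Var 1)) V HV v v (le_refl v) boxA) as [BA|xv].
  - exact (BA x vx (le_refl x) (le_refl x)).
  - exact (neq (le_antisym v x vx xv)).
Qed.

End Completeness.

Theorem KM_frame_iff :
  KM_frame le prec <->
  same_rel prec (strict_part le) /\ well_founded (transp W (strict_part le)).
Proof.
  split.
  - intros KMf.
    assert (same : same_rel prec (strict_part le)).
    { intros w x. split; [apply KM_frame_prec_strict | apply KM_frame_strict_prec];
        assumption. }
    split; [exact same|].
    apply (wf_incl _ _ _ (fun x y => proj2 (same y x))).
    exact (KM_frame_wf_prec KMf).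
  - intros [same wf]. exact (KM_sound same wf).
Qed.

End Frame.

Theorem corollary4p10 (W : Type) (le prec : W -> W -> Prop) :
  im_frame W le prec ->
  ((same_rel prec (strict_part le) /\ scattered (alexandroff_open le))
     <-> KM_frame le prec) /\
  (KM_frame le prec <->
     (same_rel prec (strict_part le) /\
      ~ exists f : nat -> W, forall n, strict_part le (f n) (f (S n)))).
Proof.
  intros frame.
  pose proof (scattered_alexandroff_iff_wf W le
                (proj1 frame) (proj1 (proj2 frame))) as scattered_wf.
  assert (no_chain_wf : (~ exists f : nat -> W, forall n, strict_part le (f n) (f (S n)))
                        <-> well_founded (transp W (strict_part le))).
  { symmetry. apply wf_iff_no_descending_chain. }
  pose proof (KM_frame_iff W le prec frame) as KM_wf.
  tauto.
Qed.
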